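(* Let $\Gamma$ be a finite tree, sufficiently subdivided for $n$, with root $\ast$ and discrete gradient vector field $W$ on $\mathcal{UD}^n\Gamma$ as in the context. Let $$k:=\min\left\{\left\lfloor\tfrac n2\right\rfloor,\ \#\{v\in V(\Gamma)\mid v\text{ is essential}\}\right\}.$$ Then every critical cell of $\mathcal{UD}^n\Gamma$ has dimension at most $k$. In particular $\mathcal{UD}^n\Gamma$ strong deformation retracts onto $(\mathcal{UD}^n\Gamma)_k'$, the $k$-skeleton of $\mathcal{UD}^n\Gamma$ with the redundant $k$-cells removed.
   Context: $\Gamma$ is sufficiently subdivided for $n$ if every path between distinct vertices of degree $\ne2$ passes through at least $n-1$ edges. $d(v)$ denotes degree, and $v$ is essential if $d(v)\ge3$. $\mathcal{UD}^n\Gamma$ is the cell complex whose cells are unordered $n$-element sets $c=\{c_1,\dots,c_n\}$ where each $c_i$ is a vertex or an edge of $\Gamma$ and the closed sets $c_i$ are pairwise disjoint; dimension = number of edges; faces are obtained by replacing edges by endpoints. Fix a vertex $\ast$ of degree $1$ (here $T=\Gamma$). For vertices $v_1,v_2$, $v_1\wedge v_2$ is the endpoint other than $\ast$ of $[\ast,v_1]\cap[\ast,v_2]$, or $\ast$ if this is $\{\ast\}$. Directions (edges) at each vertex $v$ are labelled $0,\dots,d(v)-1$, label $0$ for the edge towards $\ast$ (the direction from $\ast$ gets label $1$); $g(v_1,v_2)$ is the label of the direction from $v_1$ on the geodesic to $v_2$, $g(v,v)=0$. Order: $v_1\le v_2$ iff, with $v_3=v_1\wedge v_2$, $v_3=v_1$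 or ($v_3\ne v_1$ and $g(v_3,v_1)<g(v_3,v_2)$). For an edge $e$, $\iota(e)\ge\tau(e)$ are its endpoints; for $v\ne\ast$, $e(v)$ is the edge at $v$ in direction $0$. A vertex $v\neq\ast$ of a cell $c$ is unblocked if $e(v)$ is disjoint from every element of $c$ other than $v$ (then the elementary reduction from $v$ replaces $v$ by $e(v)$); otherwise, and always for $v=\ast$, blocked. The principal reduction of $c$ is the elementary reduction from its smallest unblocked vertex. $W(c)$ is the principal reduction of $c$ when it exists and $c$ is not itself in the image of $W$ (on cells of one lower dimension); otherwise undefined. Cells in the domain of $W$ are redundant, in the image collapsible, otherwise critical. *)

From mathcomp Require Import all_boot.
Set Implicit Arguments. Unset Strict Implicit. Unset Printing Implicit Defensive.

Section TreeConf.
Variable V : finType.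
Variable adj : rel V.

Definition deg (v : V) : nat := #|[set w | adj v w]|.
Definition essential (v : V) : bool := 2 < deg v.

Definition is_tree : Prop :=
  [/\ symmetric adj, irreflexive adj, (forall x y, connect adj x y) &
      ~ (exists p : seq V, ucycleb adj p && (2 < size p))].

Definition suff_subdiv (n : nat) : Prop :=
  forall (u v : V) (p : seq V), u != v -> deg u != 2 -> deg v != 2 ->
    path adj u p -> last u p = v -> n.-1 <= size p.

Fixpoint ball (k : nat) (u : V) : {set V} :=
  match k with
  | 0 => [set u]
  | k'.+1 => ball k' u :|: [set y | [exists x in ball k' u, adj x y]]
  end.
Definition dist (u v : V) : nat := find (fun k => v \in ball k u) (iota 0 #|V|).

Variable star : V.
Variable lab : V -> V -> nat.   (* lab v w = label of direction from v to its neighbour w *)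

Definition parent (v : V) : option V :=
  [pick w | adj v w && (dist w star < dist v star)].

Definition valid_labelling : Prop :=
  (forall w, adj star w -> lab star w = 1) /\
  forall v, v != star ->
    [/\ {in [set w | adj v w] &, injective (lab v)},
        (forall w, adj v w -> lab v w < deg v) &
        (forall w, adj v w -> dist w star < dist v star -> lab v w = 0)].

(* g(v1,v2): label of the direction from v1 on the geodesic to v2; g(v,v)=0 *)
Definition g (v1 v2 : V) : nat :=
  if [pick w | adj v1 w && (dist w v2 < dist v1 v2)] is Some w then lab v1 w else 0.

Definition on_geod (a b w : V) : bool := dist a w + dist w b == dist a b.

(* v1 /\ v2 : far endpoint of [star,v1] \cap [star,v2] *)
Definition wedge (v1 v2 : V) : V :=
  [arg max_(w > star | on_geod star v1 w && on_geod star v2 w) dist star w].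

Definition vle (v1 v2 : V) : bool :=
  let v3 := wedge v1 v2 in (v3 == v1) || (g v3 v1 < g v3 v2).

(* cells of UD^n Gamma: sets of vertices (inl) and edges (inr, a 2-element
   vertex set) with pairwise disjoint closures *)
Definition elt := (V + {set V})%type.
Definition clos (a : elt) : {set V} := match a with inl v => [set v] | inr e => e end.
Definition is_edge (e : {set V}) : bool := [exists x, exists y, adj x y && (e == [set x; y])].
Definition cell := {set elt}.

Definition is_cell (n : nat) (c : cell) : bool :=
  [&& #|c| == n,
      [forall a in c, if a is inr e then is_edge e else true] &
      [forall a in c, forall b in c, (a != b) ==> [disjoint clos a & clos b]]].

Definition dim (c : cell) : nat := #|[set a in c | if a is inr _ then true else false]|.

Definition e_of (v : V) : option {set V} :=
  if parent v is Some w then Some [set v; w] else None.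

Definition unblocked (c : cell) (v : V) : bool :=
  [&& v != star, inl v \in c &
      if e_of v is Some e then [forall a in c, (a != inl v) ==> [disjoint clos a & e]]
      else false].

Definition principal_vertex (c : cell) : option V :=
  [pick v | unblocked c v && [forall w, unblocked c w ==> vle v w]].

Definition principal_reduction (c : cell) : option cell :=
  if principal_vertex c is Some v then
    (if e_of v is Some e then Some (inr e |: (c :\ inl v)) else None)
  else None.

Variable n : nat.

(* redundant d c : c is a d-cell in the domain of W;
   W(c) = principal reduction of c, defined when it exists and c is not in
   the image of W on (d-1)-cells *)
Fixpoint redundant (d : nat) (c : cell) : bool :=
  [&& is_cell n c, dim c == d, principal_reduction c != None &
      ~~ match d with
         | 0 => false
         | d'.+1 => [exists c' : cell, redundant d' c' && (principal_reduction c' == Some c)]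
         end].

Definition collapsible (c : cell) : bool :=
  is_cell n c &&
  match dim c with
  | 0 => false
  | d'.+1 => [exists c' : cell, redundant d' c' && (principal_reduction c' == Some c)]
  end.

Definition critical (c : cell) : bool :=
  [&& is_cell n c, ~~ redundant (dim c) c & ~~ collapsible c].

End TreeConf.

(** A critical cell c has no unblocked vertex, and every edge e(u) of c is
    blocked by a vertex v of c that is a sibling of u (par v = par u).
    Call e(x) a principal edge of c when c is the principal reduction of the
    cell c_x obtained from c by replacing e(x) with x.  If e(u) had no
    blocking sibling, u would be the only unblocked vertex of c_u, so e(u)
    would be principal.  The order on vertices is the lexicographic order of
    the label sequences read along the geodesics from the root, hence total,
    so there would be a principal edge e(x) with x least.  Then c_x is
    redundant: were c_x the principal reduction of some c'' from a vertex y,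
    e(y) would be another principal edge and x would be unblocked in c'',
    whence x <= y <= x; but e(y) lies in c_x and e(x) does not.  So
    c = W(c_x) would be collapsible.
    As the closures of the elements of c are disjoint, u |-> par u is
    injective on the edges e(u) of c, and par u is essential: it is adjacent
    to u, v and its own parent (it is not the root, which has degree 1).  So
    dim c is at most the number of essential vertices, and the edges of c
    together with their blocking siblings are 2 dim c distinct elements of
    the n-element cell c. *)

From Pilot Require Import Defs.
From mathcomp Require Import all_boot all_order zify.
Set Implicit Arguments. Unset Strict Implicit. Unset Printing Implicit Defensive.
Import Order.TTheory.

Section SeqPrefix.
Variable T : eqType.
Implicit Types s t : seq T.

Fixpoint lcp s t : nat :=
  match s, t with
  | x :: s', y :: t' => if x == y then (lcp s' t').+1 else 0
  | _, _ => 0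
  end.

Lemma lcpC s t : lcp s t = lcp t s.
Proof. by elim: s t => [|x s IH] [|y t] //=; rewrite eq_sym IH. Qed.

Lemma lcp_leql s t : lcp s t <= size s.
Proof. by elim: s t => [|x s IH] [|y t] //=; case: eqP => // _; rewrite ltnS IH. Qed.

Lemma lcp_leqr s t : lcp s t <= size t.
Proof. by rewrite lcpC lcp_leql. Qed.

Lemma lcpss s : lcp s s = size s.
Proof. by elim: s => //= x s ->; rewrite eqxx. Qed.

Lemma take_lcp s t : take (lcp s t) s = take (lcp s t) t.
Proof. by elim: s t => [|x s IH] [|y t] //=; case: eqP => //= ->; rewrite IH. Qed.

Lemma nth_lcp x0 s t : lcp s t < size s -> lcp s t < size t ->
  nth x0 s (lcp s t) != nth x0 t (lcp s t).
Proof. by elim: s t => [|x s IH] [|y t] //=; case: eqP => [_|/eqP//]; rewrite !ltnS; apply: IH. Qed.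

Lemma nth_lcp_common x0 s t i : i < lcp s t -> nth x0 s i = nth x0 t i.
Proof. by move=> hi; rewrite -(nth_take x0 hi) take_lcp nth_take. Qed.

Lemma leq_lcp k s t : k <= size s -> k <= size t -> take k s = take k t -> k <= lcp s t.
Proof.
elim: s t k => [|x s IH] [|y t] [|k] //=; rewrite !ltnS => hs ht [-> e].
by rewrite eqxx ltnS IH.
Qed.

Lemma lcp_rcons s t z : lcp s t <= lcp (rcons s z) t <= (lcp s t).+1.
Proof.
elim: s t => [|x s IH] [|y t] //=; first by case: (z == y).
by case: eqP => // _; rewrite !ltnS.
Qed.

Lemma last_drop (x0 : T) k s : k < size s -> last x0 (drop k s) = last x0 s.
Proof. by move=> hk; rewrite -{2}(cat_take_drop k s) last_cat (drop_nth x0 hk). Qed.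

Lemma last_rev_belast (x : T) s : last (last x s) (rev (belast x s)) = x.
Proof. by case: s => [|y s] //=; rewrite rev_cons last_rcons. Qed.

End SeqPrefix.

Lemma lexi_cat2l (d : Order.disp_t) (T : porderType d) (p s t : seq T) :
  (p ++ s <= p ++ t :> seqlexi T)%O = (s <= t :> seqlexi T)%O.
Proof. by elim: p => //= x p IH; rewrite eqhead_lexiE. Qed.

(** * Distances in a connected graph *)

Section Tree.
Variables (V : finType) (adj : rel V).
Hypothesis adj_sym : symmetric adj.
Hypothesis adj_irr : irreflexive adj.
Hypothesis adj_conn : forall x y, connect adj x y.

Local Notation dst := (dist adj).

Lemma in_ball k u v : v \in ball adj k u <->
  exists p, [/\ path adj u p, last u p = v & size p <= k].
Proof.
elim: k v => [|k IH] v /=.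
  rewrite inE; split; first by move/eqP->; exists [::].
  by case=> [[|x p]] [] //= _ ->.
rewrite in_setU inE; split.
  case/orP=> [/IH [p [hp <- hk]]|/existsP [x /andP [/IH [p [hp hx hk]] hxv]]].
    by exists p; split => //; apply: leqW.
  by exists (rcons p v); rewrite rcons_path last_rcons size_rcons hp hx hxv.
case=> p [hp hv hk]; case: (leqP (size p) k) => hpk.
  by apply/orP; left; apply/IH; exists p.
apply/orP; right; move: hp hv hk hpk; case/lastP: p => [//|q y].
rewrite rcons_path last_rcons size_rcons ltnS => /andP [hq hy] <- hk hqk.
apply/existsP; exists (last u q); rewrite hy andbT; apply/IH.
by exists q; split => //; apply: leqW.
Qed.

Lemma dist_leq_walk u p : path adj u p -> dst u (last u p) <= size p.
Proof.
move=> hp; rewrite /dist; case: (ltnP (size p) #|V|) => h.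
  rewrite leqNgt; apply/negP => /(before_find 0); rewrite nth_iota // add0n.
  by have -> : last u p \in ball adj (size p) u by apply/in_ball; exists p.
by apply: leq_trans (find_size _ _) _; rewrite size_iota.
Qed.

Lemma geodesic_walk u v : exists p, [/\ path adj u p, last u p = v & size p = dst u v].
Proof.
have /connectP [p hp ->] := adj_conn u v.
case: (shortenP hp) => p' hp' hu _.
have hs : size p' < #|V|.
  by have := max_card (mem (u :: p')); rewrite (card_uniqP hu).
have hh : has (fun k => last u p' \in ball adj k u) (iota 0 #|V|).
  by apply/hasP; exists (size p'); [rewrite mem_iota | apply/in_ball; exists p'].
have := nth_find 0 hh; rewrite has_find size_iota in hh.
rewrite nth_iota // add0n -/(dist adj u (last u p')) => /in_ball [q [hq <- hqs]].
by exists q; split=> //; apply/eqP; rewrite eqn_leq hqs dist_leq_walk.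
Qed.

Lemma dist_triangle x y z : dst x z <= dst x y + dst y z.
Proof.
have [p [hp <- <-]] := geodesic_walk x y; have [q [hq <- <-]] := geodesic_walk (last x p) z.
by rewrite -size_cat -last_cat dist_leq_walk // cat_path hp.
Qed.

Lemma path_rev_walk x p : path adj x p -> path adj (last x p) (rev (belast x p)).
Proof.
by move=> hp; rewrite rev_path; apply: etrans hp; apply: eq_path => a b; rewrite adj_sym.
Qed.

Lemma distC x y : dst x y = dst y x.
Proof.
suff le_dist a b : dst b a <= dst a b by apply/eqP; rewrite eqn_leq !le_dist.
have [p [hp <- <-]] := geodesic_walk a b.
by have := dist_leq_walk (path_rev_walk hp); rewrite last_rev_belast size_rev size_belast.
Qed.

Lemma distxx x : dst x x = 0.
Proof. by apply/eqP; rewrite -leqn0 (@dist_leq_walk x [::]). Qed.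

Lemma dist_eq0 x y : dst x y = 0 -> x = y.
Proof. by case: (geodesic_walk x y) => -[|z p] [_ <- <-]. Qed.

Lemma dist_adj x y : adj x y -> dst x y = 1.
Proof.
move=> hxy; apply/eqP; rewrite eqn_leq (@dist_leq_walk x [:: y]) /= ?hxy // lt0n.
by apply/negP => /eqP /dist_eq0 exy; rewrite exy adj_irr in hxy.
Qed.

Lemma dist_adj_leq x y z : adj x y -> dst x z <= (dst y z).+1.
Proof. by move=> hxy; apply: leq_trans (dist_triangle x y z) _; rewrite dist_adj. Qed.

(** * The tree rooted at star *)

Variable star : V.

Definition depth v := dst v star.
Definition par v := odflt star (parent adj star v).

Lemma parent_spec v : v != star ->
  [/\ parent adj star v = Some (par v), adj v (par v) & depth v = (depth (par v)).+1].
Proof.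
move=> hv; have [[|w p] [/= hp hl hs]] := geodesic_walk v star; first by rewrite hl eqxx in hv.
case/andP: hp => hvw hp.
have hlt : dst w star < dst v star by rewrite -hs -hl ltnS dist_leq_walk.
rewrite /par /parent; case: pickP => [x /andP [hvx hx]|/(_ w)]; last by rewrite hvw hlt.
by split => //; apply/eqP; rewrite eqn_leq /depth hx dist_adj_leq.
Qed.

Lemma adj_par v : v != star -> adj v (par v).
Proof. by case/parent_spec. Qed.

Lemma depth_par v : v != star -> depth v = (depth (par v)).+1.
Proof. by case/parent_spec. Qed.

Lemma depth_star : depth star = 0.
Proof. exact: distxx. Qed.

Lemma depth_eq0 v : depth v = 0 -> v = star.
Proof. exact: dist_eq0. Qed.

Lemma depth_adj_leq x y : adj x y -> depth x <= (depth y).+1.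
Proof. exact: dist_adj_leq. Qed.

Lemma depth_ind (P : V -> Prop) :
  P star -> (forall v, v != star -> P (par v) -> P v) -> forall v, P v.
Proof.
move=> Pstar Ppar v; elim: {v}(depth v) {-2}v (leqnn (depth v)) => [|k IH] v hv.
  by move: hv; rewrite leqn0 => /eqP /depth_eq0 ->.
have [->//|nv] := eqVneq v star; apply: Ppar => //; apply: IH.
by move: hv; rewrite (depth_par nv).
Qed.

Fixpoint ancestors_at k v := if k is k'.+1 then rcons (ancestors_at k' (par v)) v else [:: v].
Definition ancestors v := ancestors_at (depth v) v.

Lemma ancestors_star : ancestors star = [:: star].
Proof. by rewrite /ancestors depth_star. Qed.

Lemma ancestorsS v : v != star -> ancestors v = rcons (ancestors (par v)) v.
Proof. by move=> hv; rewrite /ancestors (depth_par hv). Qed.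

Lemma map_depth_ancestors v : map depth (ancestors v) = iota 0 (depth v).+1.
Proof.
elim/depth_ind: v => [|v hv IH]; first by rewrite ancestors_star /= depth_star.
by rewrite ancestorsS // map_rcons IH (depth_par hv) -cats1 -[in RHS]addn1 iotaD.
Qed.

Lemma size_ancestors v : size (ancestors v) = (depth v).+1.
Proof. by rewrite -(size_map depth) map_depth_ancestors size_iota. Qed.

Lemma uniq_ancestors v : uniq (ancestors v).
Proof. by apply: (@map_uniq _ _ depth); rewrite map_depth_ancestors iota_uniq. Qed.

Lemma depth_nth_ancestors v i : i <= depth v -> depth (nth star (ancestors v) i) = i.
Proof.
move=> hi; rewrite -(nth_map star 0) ?size_ancestors //.
by rewrite map_depth_ancestors nth_iota.
Qed.

Lemma mem_nth_ancestors v i : i <= depth v -> nth star (ancestors v) i \in ancestors v.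
Proof. by move=> hi; rewrite mem_nth // size_ancestors. Qed.

Lemma nth_ancestors_depth v : nth star (ancestors v) (depth v) = v.
Proof.
elim/depth_ind: v => [|v hv IH]; first by rewrite ancestors_star depth_star.
by rewrite ancestorsS // nth_rcons size_ancestors (depth_par hv) ltnn eqxx.
Qed.

Lemma last_ancestors v : last star (ancestors v) = v.
Proof. by rewrite -nth_last size_ancestors nth_ancestors_depth. Qed.

Lemma ancestors_self v : v \in ancestors v.
Proof. by rewrite -{1}(nth_ancestors_depth v) mem_nth_ancestors. Qed.

Lemma nth_ancestors0 v : nth star (ancestors v) 0 = star.
Proof. by apply: depth_eq0; rewrite depth_nth_ancestors. Qed.

Lemma take1_ancestors v : take 1 (ancestors v) = [:: star].
Proof. by rewrite (take_nth star) ?size_ancestors // take0 nth_ancestors0. Qed.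

Lemma depth_ancestor v w : w \in ancestors v -> depth w <= depth v.
Proof.
move=> hw; have : depth w \in map depth (ancestors v) by apply: map_f.
by rewrite map_depth_ancestors mem_iota.
Qed.

Lemma ancestors_ancestor v w : w \in ancestors v -> ancestors w = take (depth w).+1 (ancestors v).
Proof.
elim/depth_ind: v => [|v hv IH].
  by rewrite ancestors_star inE => /eqP ->; rewrite ancestors_star depth_star.
rewrite ancestorsS // mem_rcons inE => /orP [/eqP ->|hw].
  by rewrite -ancestorsS // take_oversize // size_ancestors.
by rewrite -cats1 takel_cat ?IH // size_ancestors ltnS depth_ancestor.
Qed.

Lemma ancestorE v w : w \in ancestors v -> w = nth star (ancestors v) (depth w).
Proof.
move=> hw; rewrite -(nth_take star (ltnSn (depth w))) -ancestors_ancestor //.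
by rewrite nth_ancestors_depth.
Qed.

Lemma depth_ancestor_lt v w : w \in ancestors v -> w != v -> depth w < depth v.
Proof.
move=> hw hne; rewrite ltn_neqAle depth_ancestor // andbT.
by apply: contra hne => /eqP e; rewrite (ancestorE hw) e nth_ancestors_depth.
Qed.

Lemma par_nth_ancestors v i : i < depth v ->
  par (nth star (ancestors v) i.+1) = nth star (ancestors v) i.
Proof.
move=> hi; set x := nth star (ancestors v) i.+1.
have dx : depth x = i.+1 by apply: depth_nth_ancestors.
have nx : x != star by apply: contra_eqN dx => /eqP ->; rewrite depth_star.
have := ancestors_ancestor (mem_nth_ancestors hi).
rewrite -/x (ancestorsS nx) dx (take_nth star) ?size_ancestors ?ltnS // => /rcons_inj [= e].
have dp : depth (par x) = i by apply: succn_inj; rewrite -depth_par.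
by rewrite -(nth_ancestors_depth (par x)) e dp nth_take.
Qed.

Lemma adj_nth_ancestors v i : i < depth v ->
  adj (nth star (ancestors v) i) (nth star (ancestors v) i.+1).
Proof.
move=> hi; rewrite -par_nth_ancestors // adj_sym adj_par //.
by apply: contra_eqN (depth_nth_ancestors hi) => /eqP ->; rewrite depth_star.
Qed.

Lemma path_ancestors v i : i <= depth v ->
  path adj (nth star (ancestors v) i) (drop i.+1 (ancestors v)).
Proof.
move=> hi; apply/(pathP star) => j; rewrite size_drop size_ancestors subSS => hj.
rewrite -(drop_nth star) ?size_ancestors // !nth_drop addSn adj_nth_ancestors //.
by rewrite -ltn_subRL.
Qed.

Lemma depth_drop_ancestors v k x : x \in drop k (ancestors v) -> k <= depth x.
Proof.
case/(nthP star) => j; rewrite size_drop size_ancestors => hj <-.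
by rewrite nth_drop depth_nth_ancestors ?leq_addr //; lia.
Qed.

Lemma lcp_ancestors_gt0 v w : 0 < lcp (ancestors v) (ancestors w).
Proof. by apply: leq_lcp; rewrite ?size_ancestors // !take1_ancestors. Qed.

Lemma lcp_ancestors_leq v w : v \notin ancestors w -> lcp (ancestors v) (ancestors w) <= depth v.
Proof.
apply: contraNT; rewrite -ltnNge -size_ancestors => hlt.
have e : lcp (ancestors v) (ancestors w) = size (ancestors v).
  by apply/eqP; rewrite eqn_leq lcp_leql.
have := take_lcp (ancestors v) (ancestors w); rewrite {1}e take_size => ev.
by apply: (@mem_take (lcp (ancestors v) (ancestors w))); rewrite -ev ancestors_self.
Qed.

Lemma adj_ancestor_par a b : adj a b -> a \in ancestors b -> b != star /\ a = par b.
Proof.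
move=> hab ha; have nab : a != b by apply: contraTneq hab => ->; rewrite adj_irr.
have db : depth b = (depth a).+1.
  apply/eqP; rewrite eqn_leq depth_adj_leq 1?adj_sym //.
  exact: depth_ancestor_lt.
have nb : b != star by apply: contra_eqN db => /eqP ->; rewrite depth_star.
split=> //; have := @par_nth_ancestors b (depth a); rewrite -db nth_ancestors_depth.
by rewrite -(ancestorE ha) => ->; rewrite // db.
Qed.

Hypothesis adj_acyclic : ~ (exists p : seq V, ucycleb adj p && (2 < size p)).

Lemma ancestor_of_adj a b : adj a b -> (a \in ancestors b) || (b \in ancestors a).
Proof.
move=> hab; apply/negPn/negP; rewrite negb_or => /andP [na nb]; apply: adj_acyclic.
set sa := ancestors a; set sb := ancestors b; set m := lcp sa sb.
have m_gt0 : 0 < m := lcp_ancestors_gt0 a b.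
have ma : m <= depth a := lcp_ancestors_leq na.
have mb : m <= depth b by rewrite /m lcpC; apply: lcp_ancestors_leq.
(* w is the deepest common ancestor of a and b and c its child towards b:
   w ... a b ... c is a cycle. *)
set w := nth star sa m.-1; set c := nth star sb m.
have wb : w = nth star sb m.-1.
  by rewrite /w (nth_lcp_common _ (t := sb)) ?prednK.
have dsa : drop m.-1 sa = w :: drop m sa.
  by rewrite (drop_nth star) ?prednK // size_ancestors; lia.
have dsb : drop m sb = c :: drop m.+1 sb by rewrite (drop_nth star) // size_ancestors.
have dc : depth c = m by apply: depth_nth_ancestors.
have nc : c != star by apply: contra_eqN dc => /eqP ->; rewrite depth_star eq_sym -lt0n.
have adj_cw : adj c w by rewrite wb -par_nth_ancestors ?prednK ?adj_par //; lia.
have last_a : last w (drop m sa) = a.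
  rewrite -[last w _]/(last star (w :: _)) -dsa last_drop ?last_ancestors //.
  by rewrite size_ancestors; lia.
have last_b : last c (drop m.+1 sb) = b.
  by rewrite -[last c _]/(last star (c :: _)) -dsb last_drop ?size_ancestors ?last_ancestors.
exists (drop m.-1 sa ++ rev (drop m sb)); apply/andP; split; [apply/andP; split|].
- rewrite (cycle_path star) last_cat dsb rev_cons last_rcons -rev_cons dsa /= adj_cw.
  rewrite cat_path (_ : path adj w (drop m sa)); last first.
    by have := @path_ancestors a m.-1; rewrite prednK //; apply; lia.
  rewrite last_a lastI rev_rcons last_b /= hab /=.
  by have := path_rev_walk (path_ancestors mb); rewrite last_b.
- rewrite cat_uniq rev_uniq !drop_uniq ?uniq_ancestors // andbT.
  apply/hasP => -[x]; rewrite mem_rev => xb xa.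
  have : (depth x).+1 <= m.
    apply: leq_lcp; rewrite ?size_ancestors ?ltnS ?depth_ancestor ?(mem_drop xa) ?(mem_drop xb) //.
    by rewrite -!ancestors_ancestor ?(mem_drop xa) ?(mem_drop xb).
  by have := depth_drop_ancestors xb; lia.
- by rewrite size_cat size_rev !size_drop !size_ancestors; lia.
Qed.

Lemma adj_parent a b : adj a b -> (a != star /\ b = par a) \/ (b != star /\ a = par b).
Proof.
move=> hab; case/orP: (ancestor_of_adj hab) => [ha|hb]; first by right; apply: adj_ancestor_par.
by left; apply: adj_ancestor_par; rewrite // adj_sym.
Qed.

Lemma ancestors_adj a b : adj a b ->
  ancestors b = rcons (ancestors a) b \/ ancestors a = rcons (ancestors b) a.
Proof. by case/adj_parent => -[h ->]; [right|left]; rewrite ancestorsS. Qed.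

Lemma walk_lcp x p : path adj x p ->
  size (ancestors x) + size (ancestors (last x p)) <=
  size p + 2 * lcp (ancestors x) (ancestors (last x p)).
Proof.
elim: p x => [|z p IH] x /=; first by rewrite lcpss add0n mul2n addnn.
case/andP => hxz /IH; case: (ancestors_adj hxz) => ->.
  (* [set] identifies the two copies of this lcp, which differ in an implicit
     type argument and would otherwise be distinct atoms for lia *)
  have := lcp_rcons (ancestors x) (ancestors (last z p)) z.
  by rewrite size_rcons; set l := lcp (rcons _ _) _; lia.
have := lcp_rcons (ancestors z) (ancestors (last z p)) x.
by rewrite size_rcons; set l := lcp (rcons _ _) _; lia.
Qed.

Lemma dist_ancestor_leq v w : w \in ancestors v -> dst w v + depth w <= depth v.
Proof.
elim/depth_ind: v => [|v nv IH]; first by rewrite ancestors_star inE => /eqP ->; rewrite distxx.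
rewrite ancestorsS // mem_rcons inE => /orP [/eqP ->|hw]; first by rewrite distxx.
apply: leq_trans (leq_add (dist_triangle w (par v) v) (leqnn _)) _.
by rewrite [dst (par v) v]dist_adj 1?adj_sym ?adj_par // (depth_par nv) addnAC addn1 ltnS IH.
Qed.

Lemma dist_ancestor v w : w \in ancestors v -> dst w v + depth w = depth v.
Proof.
move=> hw; apply/eqP; rewrite eqn_leq dist_ancestor_leq //= [dst w v]distC.
exact: dist_triangle.
Qed.

Lemma dist_not_ancestor v w : w \notin ancestors v -> depth v + 2 <= dst w v + depth w.
Proof.
move=> hw; have [p [hp ev <-]] := geodesic_walk w v; subst v.
have := walk_lcp hp; have := lcp_ancestors_leq hw; rewrite !size_ancestors; lia.
Qed.

Lemma on_geodE v w : on_geod adj star v w = (w \in ancestors v).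
Proof.
rewrite /on_geod (distC star w) (distC star v) -/(depth w) -/(depth v).
have [hw|hw] := boolP (w \in ancestors v); first by rewrite addnC dist_ancestor ?eqxx.
by apply/negbTE; have := dist_not_ancestor hw; lia.
Qed.

Lemma wedgeE v1 v2 :
  wedge adj star v1 v2 = nth star (ancestors v1) (lcp (ancestors v1) (ancestors v2)).-1.
Proof.
set P := fun w => on_geod adj star v1 w && on_geod adj star v2 w.
have Pstar : P star.
  by rewrite /P !on_geodE -{1}(nth_ancestors0 v1) -{2}(nth_ancestors0 v2) !mem_nth_ancestors.
rewrite /wedge; case: (arg_maxnP (fun w => dst star w) Pstar) => w.
rewrite /P !on_geodE => /andP [w1 w2] w_max.
set m := lcp (ancestors v1) (ancestors v2).
have m_gt0 : 0 < m := lcp_ancestors_gt0 v1 v2.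
have m1 : m <= (depth v1).+1 by rewrite -size_ancestors lcp_leql.
have m2 : m <= (depth v2).+1 by rewrite -size_ancestors lcp_leqr.
set a := nth star (ancestors v1) m.-1.
have a1 : a \in ancestors v1 by apply: mem_nth_ancestors; lia.
have a2 : a \in ancestors v2.
  by rewrite /a (nth_lcp_common _ (t := ancestors v2)) ?prednK // mem_nth_ancestors //; lia.
have da : depth a = m.-1 by apply: depth_nth_ancestors; lia.
have := w_max a; rewrite /P !on_geodE a1 a2 !(distC star) -!/(depth _) da => /(_ isT) le_aw.
have : (depth w).+1 <= m.
  by apply: leq_lcp; rewrite ?size_ancestors ?ltnS ?depth_ancestor // -!ancestors_ancestor.
by move=> le_wm; rewrite (ancestorE w1); congr nth; lia.
Qed.

Lemma wedgeC v1 v2 : wedge adj star v1 v2 = wedge adj star v2 v1.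
Proof.
by rewrite !wedgeE [in RHS]lcpC (nth_lcp_common _ (t := ancestors v2)) ?prednK ?lcp_ancestors_gt0.
Qed.

Lemma lcp_ancestors_pred_leq v1 v2 : (lcp (ancestors v1) (ancestors v2)).-1 <= depth v1.
Proof. by rewrite -ltnS prednK ?lcp_ancestors_gt0 // -size_ancestors lcp_leql. Qed.

Lemma wedge_ancestor v1 v2 : wedge adj star v1 v2 \in ancestors v1.
Proof. by rewrite wedgeE mem_nth_ancestors ?lcp_ancestors_pred_leq. Qed.

Lemma depth_wedge v1 v2 : depth (wedge adj star v1 v2) = (lcp (ancestors v1) (ancestors v2)).-1.
Proof. by rewrite wedgeE depth_nth_ancestors ?lcp_ancestors_pred_leq. Qed.

(** * The order on vertices *)

Section VertexOrder.
Variable lab : V -> V -> nat.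
Hypothesis star_deg1 : deg adj star = 1.
Hypothesis lab_inj : forall v, v != star -> {in [set w | adj v w] &, injective (lab v)}.

Local Notation g := (g adj lab).
Local Notation wedge := (wedge adj star).
Local Notation vle := (vle adj star lab).

Lemma gxx v : g v v = 0.
Proof. by rewrite /g; case: pickP => // w /andP [_]; rewrite distxx. Qed.

Lemma g_ancestor a v : a \in ancestors v -> a != v ->
  g a v = lab a (nth star (ancestors v) (depth a).+1).
Proof.
move=> ha nav; have lt_av := depth_ancestor_lt ha nav.
set c := nth star (ancestors v) (depth a).+1.
have hc : c \in ancestors v by apply: mem_nth_ancestors.
have dc : depth c = (depth a).+1 by apply: depth_nth_ancestors.
have nc : c != star by apply: contra_eqN dc => /eqP ->; rewrite depth_star.
have ac : adj a c by rewrite {1}(ancestorE ha) -par_nth_ancestors // adj_sym adj_par.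
have := dist_ancestor ha; have := dist_ancestor hc; rewrite dc => dcv dav.
rewrite /g; case: pickP => [w /andP [aw lt_w]|/(_ c)]; last by rewrite ac /=; lia.
have dw : depth w <= (depth a).+1 by rewrite depth_adj_leq // adj_sym.
have [hw|hw] := boolP (w \in ancestors v); last by have := dist_not_ancestor hw; lia.
have := dist_ancestor hw => dwv.
by rewrite (ancestorE hw) /c; congr (lab _ (nth _ _ _)); lia.
Qed.

Lemma star_adj_uniq x y : adj star x -> adj star y -> x = y.
Proof.
move: star_deg1; rewrite /deg => /eqP /cards1P [z hz] hx hy.
have : x \in [set w | adj star w] by rewrite inE.
have : y \in [set w | adj star w] by rewrite inE.
by rewrite hz !inE => /eqP -> /eqP ->.
Qed.

Lemma lab_adj_neq a x y : adj a x -> adj a y -> x != y -> lab a x != lab a y.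
Proof.
move=> ax ay; have [ea | na] := eqVneq a star; first by subst a; rewrite (star_adj_uniq ax ay) eqxx.
by apply: contraNneq => /(lab_inj na); rewrite !inE => ->.
Qed.

Lemma g_wedge_neq v1 v2 : let a := wedge v1 v2 in a != v1 -> a != v2 -> g a v1 != g a v2.
Proof.
move=> a n1 n2; have a1 : a \in ancestors v1 := wedge_ancestor v1 v2.
have a2 : a \in ancestors v2 by rewrite /a wedgeC wedge_ancestor.
have lt1 := depth_ancestor_lt a1 n1; have lt2 := depth_ancestor_lt a2 n2.
have m_gt0 := lcp_ancestors_gt0 v1 v2.
have da : (depth a).+1 = lcp (ancestors v1) (ancestors v2) by rewrite depth_wedge prednK.
have child_adj v : a \in ancestors v -> depth a < depth v ->
    adj a (nth star (ancestors v) (depth a).+1).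
  by move=> av lt; rewrite {1}(ancestorE av) adj_nth_ancestors.
by rewrite !g_ancestor // lab_adj_neq ?child_adj // da nth_lcp // size_ancestors -da ltnS.
Qed.

Definition key v : seqlexi nat := [seq lab (par x) x | x <- behead (ancestors v)].

Lemma size_key v : size (key v) = depth v.
Proof. by rewrite size_map size_behead size_ancestors. Qed.

Lemma take_key a v : a \in ancestors v -> take (depth a) (key v) = key a.
Proof. by move=> av; rewrite /key -map_take -!drop1 take_drop addn1 -ancestors_ancestor. Qed.

Lemma drop_key a v : a \in ancestors v -> a != v ->
  drop (depth a) (key v) = g a v :: drop (depth a).+1 (key v).
Proof.
move=> av nav; have lt_av := depth_ancestor_lt av nav.
rewrite (drop_nth 0) ?size_key // (nth_map star) ?size_behead ?size_ancestors //.
by rewrite nth_behead par_nth_ancestors // -ancestorE // g_ancestor.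
Qed.

Lemma vle_key v1 v2 : vle v1 v2 = (key v1 <= key v2)%O.
Proof.
set a := wedge v1 v2; have a1 : a \in ancestors v1 := wedge_ancestor v1 v2.
have a2 : a \in ancestors v2 by rewrite /a wedgeC wedge_ancestor.
have keyE v : a \in ancestors v -> key v = key a ++ drop (depth a) (key v).
  by move=> av; rewrite -{1}(cat_take_drop (depth a) (key v)) take_key.
rewrite /vle -/a (keyE v1) // (keyE v2) // lexi_cat2l.
have [e1|n1] := eqVneq a v1; first by rewrite /= e1 -{1}(size_key v1) drop_size lexi0s.
rewrite (drop_key a1 n1) /=.
have [e2|n2] := eqVneq a v2.
  by rewrite e2 gxx ltn0 -[X in drop X (key v2)](size_key v2) drop_size lexis0.
by rewrite (drop_key a2 n2) neqhead_lexiE ?g_wedge_neq.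
Qed.

Lemma vle_refl : reflexive vle.
Proof. by move=> v; rewrite vle_key lexx. Qed.

Lemma vle_anti : antisymmetric vle.
Proof.
move=> u v /andP []; rewrite /vle wedgeC; set a := wedge v u.
have [<-|nu] := eqVneq a u; have [<-|nv] := eqVneq a v => //=; rewrite ?gxx ?ltn0 //.
by move=> /ltn_trans h /h; rewrite ltnn.
Qed.

Lemma exists_vle_min (P : pred V) x : P x -> exists2 y, P y & forall w, P w -> vle y w.
Proof.
move=> Px; case: (@arg_minP _ _ _ x P key Px) => y Py y_min.
by exists y => // w Pw; rewrite vle_key y_min.
Qed.

(** * Reductions and critical cells *)

Section Cells.
Variable n : nat.
Implicit Types c : cell V.

Local Notation is_cell := (is_cell adj n).
Local Notation unblocked := (unblocked adj star).
Local Notation principal_vertex := (principal_vertex adj star lab).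
Local Notation principal_reduction := (principal_reduction adj star lab).
Local Notation redundant := (redundant adj star lab n).
Local Notation collapsible := (collapsible adj star lab n).
Local Notation critical := (critical adj star lab n).

Definition par_edge v : {set V} := [set v; par v].
Definition reduce c v : cell V := inr (par_edge v) |: (c :\ inl v).
Definition unreduce c v : cell V := inl v |: (c :\ inr (par_edge v)).

Lemma mem_par_edge v : v \in par_edge v.
Proof. by rewrite !inE eqxx. Qed.

Lemma mem_par_edge_par v : par v \in par_edge v.
Proof. by rewrite !inE eqxx orbT. Qed.

Lemma in_unreduce c v a :
  (a \in unreduce c v) = (a == inl v) || (a != inr (par_edge v)) && (a \in c).
Proof. by rewrite !inE. Qed.

Lemma is_cellP c : reflect
  [/\ #|c| = n, forall e, inr e \in c -> is_edge adj e &
      forall a b, a \in c -> b \in c -> a != b -> [disjoint clos a & clos b]]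
  (is_cell c).
Proof.
apply: (iffP and3P) => [[/eqP c_n /forall_inP c_edges /forall_inP c_disj]|[c_n c_edges c_disj]].
  split=> // [e /c_edges //|a b ac bc ab]; move: (c_disj a ac) => /forall_inP.
  by move=> /(_ b bc); rewrite ab.
split; first exact/eqP.
  by apply/forall_inP => -[//|e /c_edges].
by apply/forall_inP => a ac; apply/forall_inP => b bc; apply/implyP; apply: c_disj.
Qed.

Lemma cell_disjoint c a b : is_cell c -> a \in c -> b \in c -> a != b ->
  [disjoint clos a & clos b].
Proof. by case/is_cellP => _ _; apply. Qed.

Lemma cell_vertex_notin_edge c v e : is_cell c -> inl v \in c -> inr e \in c -> v \notin e.
Proof. by move=> cc vc ec; rewrite -disjoints1 (cell_disjoint cc vc ec). Qed.

Lemma par_edge_of_edge e : is_edge adj e -> exists2 u, u != star & e = par_edge u.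
Proof.
case/existsP => x /existsP [y /andP [xy /eqP ->]].
by case: (adj_parent xy) => -[h ->]; [exists x | exists y; rewrite // setUC].
Qed.

Lemma par_edge_inj u v : u != star -> v != star -> par_edge u = par_edge v -> u = v.
Proof.
move=> nu nv e; have : u \in par_edge v by rewrite -e mem_par_edge.
have : v \in par_edge u by rewrite e mem_par_edge.
rewrite !inE => /orP [/eqP -> //|/eqP v_pu] /orP [/eqP //|/eqP u_pv].
by have := depth_par nu; have := depth_par nv; rewrite -u_pv -v_pu; lia.
Qed.

Lemma e_ofE v : v != star -> e_of adj star v = Some (par_edge v).
Proof. by case/parent_spec => pv _ _; rewrite /e_of pv. Qed.

Lemma unblockedP c v : reflect
  [/\ v != star, inl v \in c &
      forall a, a \in c -> a != inl v -> [disjoint clos a & par_edge v]]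
  (unblocked c v).
Proof.
rewrite /Defs.unblocked; have [->|nv] /= := eqVneq v star; first by constructor; case.
rewrite (e_ofE nv); apply: (iffP andP) => [[vc /forall_inP v_free]|[_ vc v_free]].
  by split=> // a ac; move/implyP: (v_free a ac).
by split=> //; apply/forall_inP => a ac; apply/implyP; apply: v_free.
Qed.

Lemma principal_vertexP c y : principal_vertex c = Some y ->
  unblocked c y /\ forall w, unblocked c w -> vle y w.
Proof.
rewrite /Defs.principal_vertex; case: pickP => // z /andP [zc /forall_inP z_min] [<-].
by split=> // w /z_min.
Qed.

Lemma principal_vertex_eq c y : unblocked c y -> (forall w, unblocked c w -> vle y w) ->
  principal_vertex c = Some y.
Proof.
move=> yc y_min; rewrite /Defs.principal_vertex; case: pickP => [z /andP [zc /forall_inP z_min]|].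
  by congr Some; apply: vle_anti; rewrite y_min ?z_min.
by move/(_ y); rewrite yc /=; move/negP; case; apply/forall_inP.
Qed.

Lemma exists_principal_vertex c v : unblocked c v -> exists y, principal_vertex c = Some y.
Proof.
by move=> vc; have [y yc y_min] := exists_vle_min vc; exists y; apply: principal_vertex_eq.
Qed.

Lemma principal_reductionE c y : principal_vertex c = Some y ->
  principal_reduction c = Some (reduce c y).
Proof.
move=> cy; have [/unblockedP [ny _ _] _] := principal_vertexP cy.
by rewrite /Defs.principal_reduction cy e_ofE.
Qed.

Lemma principal_reductionP c c' : principal_reduction c = Some c' ->
  exists2 y, principal_vertex c = Some y & c' = reduce c y.
Proof.
case cy: (principal_vertex c) => [y|]; last by rewrite /Defs.principal_reduction cy.
by rewrite (principal_reductionE cy) => -[<-]; exists y.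
Qed.

Lemma redundant_is_cell d c : redundant d c -> is_cell c.
Proof. by case: d => [|d] /and4P []. Qed.

Lemma vertex_notin_cell c x : is_cell c -> inr (par_edge x) \in c -> inl x \notin c.
Proof.
by move=> cc xc; apply/negP => /(cell_vertex_notin_edge cc)/(_ xc); rewrite mem_par_edge.
Qed.

Lemma par_edge_notin_cell c y : is_cell c -> inl y \in c -> inr (par_edge y) \notin c.
Proof. by move=> cc yc; apply/negP => /(cell_vertex_notin_edge cc yc); rewrite mem_par_edge. Qed.

Lemma reduceK c x : is_cell c -> inr (par_edge x) \in c -> reduce (unreduce c x) x = c.
Proof.
move=> cc xc; rewrite /reduce /unreduce setU1K ?setD1K //.
by rewrite in_setD1 negb_and (vertex_notin_cell cc xc) orbT.
Qed.

Lemma unreduceK c y : is_cell c -> inl y \in c -> unreduce (reduce c y) y = c.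
Proof.
move=> cc yc; rewrite /reduce /unreduce setU1K ?setD1K //.
by rewrite in_setD1 negb_and (par_edge_notin_cell cc yc) orbT.
Qed.

Lemma is_cell_unreduce c x : is_cell c -> inr (par_edge x) \in c -> is_cell (unreduce c x).
Proof.
move=> cc xc; have [c_n c_edges c_disj] := is_cellP _ cc.
have x_notin := vertex_notin_cell cc xc.
have x_disj b : b \in c -> b != inr (par_edge x) -> [disjoint clos (inl x) & clos b].
  move=> bc bx; apply: disjointWl (c_disj _ _ xc bc _); last by rewrite eq_sym.
  by rewrite sub1set mem_par_edge.
apply/is_cellP; split.
- by rewrite cardsU1 in_setD1 (negbTE x_notin) andbF -c_n (cardsD1 (inr (par_edge x)) c) xc.
- by move=> e; rewrite in_unreduce /= => /andP [_ /c_edges].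
- move=> a b; rewrite !in_unreduce => /orP [/eqP -> | /andP [ax ac]] /orP [/eqP -> | /andP [bx bc]].
  + by rewrite eqxx.
  + by move=> _; apply: x_disj.
  + by move=> _; rewrite disjoint_sym; apply: x_disj.
  + exact: c_disj.
Qed.

Lemma dim_unreduce c x : inr (par_edge x) \in c -> dim c = (dim (unreduce c x)).+1.
Proof.
move=> xc; rewrite /dim (cardsD1 (inr (par_edge x))) inE xc add1n; congr _.+1.
by apply: eq_card => -[v|e]; rewrite !inE ?andbF ?andbT.
Qed.

Lemma unblocked_unreduce c y : is_cell c -> y != star -> inr (par_edge y) \in c ->
  unblocked (unreduce c y) y.
Proof.
move=> cc ny yc; apply/unblockedP; split=> //; first by rewrite in_unreduce eqxx.
move=> a; rewrite in_unreduce => /orP [/eqP -> /eqP // | /andP [ay ac] _].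
exact: (cell_disjoint cc ac yc).
Qed.

Lemma unblocked_shrink c1 c2 w : unblocked c1 w -> inl w \in c2 ->
  (forall a, a \in c2 -> a != inl w ->
     exists b, [/\ b \in c1, b != inl w & clos a \subset clos b]) ->
  unblocked c2 w.
Proof.
case/unblockedP => nw _ w_free wc2 shrink; apply/unblockedP; split=> // a ac2 aw.
by have [b [bc1 bw ab]] := shrink a ac2 aw; apply: disjointWl ab (w_free b bc1 bw).
Qed.

(* Encodes that c is the principal reduction of [unreduce c x] (see reduceK). *)
Definition principal_edge c x :=
  [&& x != star, inr (par_edge x) \in c & principal_vertex (unreduce c x) == Some x].

Section TwoEdges.
Variables (c : cell V) (x y : V).
Hypotheses (cc : is_cell c) (xc : inr (par_edge x) \in c) (yc : inr (par_edge y) \in c).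
Hypothesis exy : par_edge x != par_edge y.

Local Notation c2 := (unreduce (unreduce c x) y).

Lemma in_unreduce2 a :
  (a \in c2) = [|| a == inl y, a == inl x |
                 [&& a != inr (par_edge x), a != inr (par_edge y) & a \in c]].
Proof.
rewrite !in_unreduce; case: (a =P inl y) => [-> //|_] /=.
by case: (a =P inl x) => [->|_] /=; rewrite ?andbT // andbCA.
Qed.

Lemma principal_edge_unreduce2 :
  y != star -> (forall w, unblocked c2 w -> vle y w) -> principal_edge c y.
Proof.
move=> ny y_min; rewrite /principal_edge ny yc; apply/eqP.
apply: principal_vertex_eq => [|w wc]; first exact: unblocked_unreduce.
apply/y_min/(unblocked_shrink wc).
  case/unblockedP: wc => _; rewrite in_unreduce2 in_unreduce.
  by case/orP=> [->|/andP [_ ->]]; rewrite ?orbT.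
move=> a; rewrite in_unreduce2 => /or3P [/eqP ->|/eqP ->|/and3P [ax ay ac]] aw.
- by exists (inl y); rewrite in_unreduce eqxx.
- by exists (inr (par_edge x)); rewrite in_unreduce /= xc andbT sub1set mem_par_edge.
- by exists a; rewrite in_unreduce ay ac orbT.
Qed.

Lemma unblocked_unreduce2 : x != star -> unblocked c2 x.
Proof.
move=> nx; apply: (unblocked_shrink (unblocked_unreduce cc nx xc)).
  by rewrite in_unreduce2 eqxx orbT.
move=> a; rewrite in_unreduce2 => /or3P [/eqP ->|/eqP -> /eqP //|/and3P [ax ay ac]] aw.
- by exists (inr (par_edge y)); rewrite in_unreduce /= yc andbT sub1set mem_par_edge eq_sym.
- by exists a; rewrite in_unreduce ax ac orbT.
Qed.

End TwoEdges.

Lemma redundant_unreduce c x : is_cell c -> principal_edge c x ->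
  (forall y, principal_edge c y -> vle x y) -> redundant (dim (unreduce c x)) (unreduce c x).
Proof.
move=> cc /and3P [nx xc /eqP c'x] x_min; set c' := unreduce c x.
have cc' : is_cell c' := is_cell_unreduce cc xc.
have c'c : principal_reduction c' = Some c by rewrite (principal_reductionE c'x) reduceK.
case E: (dim c') => [|d] /=; rewrite cc' E eqxx c'c //=.
apply/negP => /existsP [c'' /andP [red'' /eqP /principal_reductionP [y c''y c'E]]].
have cc'' := redundant_is_cell red''.
have [yc'' y_min] := principal_vertexP c''y; have /unblockedP [ny yic'' _] := yc''.
have c''E : c'' = unreduce c' y by rewrite c'E unreduceK.
have yc' : inr (par_edge y) \in c' by rewrite c'E !inE eqxx.
have exy : par_edge x != par_edge y.
  by apply: contraTneq yc' => <-; rewrite in_unreduce /= eqxx.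
have yc : inr (par_edge y) \in c by move: yc'; rewrite in_unreduce /= => /andP [].
rewrite {}c''E in y_min.
have ye : principal_edge c y := principal_edge_unreduce2 cc xc yc exy ny y_min.
have exy' : x = y by apply: vle_anti; rewrite x_min // y_min // unblocked_unreduce2.
by rewrite exy' eqxx in exy.
Qed.

Lemma collapsible_of_principal_edge c u : is_cell c -> principal_edge c u -> collapsible c.
Proof.
move=> cc ue; have [x xe x_min] := exists_vle_min ue.
have /and3P [_ xc /eqP c'x] := xe.
rewrite /Defs.collapsible cc (dim_unreduce xc) /=; apply/existsP; exists (unreduce c x).
by rewrite redundant_unreduce // (principal_reductionE c'x) reduceK ?eqxx.
Qed.

Lemma principal_edge_no_sibling c u : is_cell c -> (forall v, ~~ unblocked c v) ->
  u != star -> inr (par_edge u) \in c ->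
  (forall v, inl v \in c -> v != star -> par v != par u) -> principal_edge c u.
Proof.
move=> cc c_blocked nu uc no_sibling; rewrite /principal_edge nu uc; apply/eqP.
apply: principal_vertex_eq => [|w /unblockedP [nw wc' w_free]].
  exact: unblocked_unreduce.
have [-> | nwu] := eqVneq w u; first exact: vle_refl.
have wc : inl w \in c by move: wc'; rewrite in_unreduce (inj_eq inl_inj) (negbTE nwu).
case/negP: (c_blocked w); apply/unblockedP; split=> // a ac aw.
have [-> {a ac aw} | au] := eqVneq a (inr (par_edge u)); last first.
  by apply: w_free; rewrite // in_unreduce au ac orbT.
have u_pw : u \notin par_edge w.
  by rewrite -disjoints1 (w_free (inl u)) ?in_unreduce ?eqxx // (inj_eq inl_inj) eq_sym.
have pu_w : w \notin par_edge u := cell_vertex_notin_edge cc wc uc.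
rewrite -setI_eq0; apply/eqP/setP => z; rewrite !inE.
apply/negP => /andP [/orP [] /eqP -> /orP [] /eqP e].
- by rewrite e eqxx in nwu.
- by rewrite e mem_par_edge_par in u_pw.
- by rewrite -e mem_par_edge_par in pu_w.
- by move: (no_sibling w wc nw); rewrite e eqxx.
Qed.

Lemma critical_no_unblocked c v : critical c -> ~~ unblocked c v.
Proof.
case/and3P => cc nred ncoll; apply/negP => vc.
have [y /principal_reductionE cy] := exists_principal_vertex vc.
move: nred ncoll; rewrite /Defs.collapsible cc.
case E: (dim c) => [|d] /=; rewrite cc E eqxx cy //=.
by rewrite negbK => ->.
Qed.

Lemma critical_sibling c u : critical c -> u != star -> inr (par_edge u) \in c ->
  exists v, [/\ inl v \in c, v != star, par v = par u & v != u].
Proof.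
move=> crit nu uc; have /and3P [cc _ ncoll] := crit.
case: (pickP (fun v => [&& inl v \in c, v != star & par v == par u])) =>
    [v /and3P [vc nv /eqP vu]|no_sibling].
  by exists v; split=> //; apply: contraTneq vc => ->; rewrite vertex_notin_cell.
case/negP: ncoll; apply: (collapsible_of_principal_edge cc (u := u)).
apply: principal_edge_no_sibling => // [v|v vc nv]; first exact: critical_no_unblocked.
by move: (no_sibling v); rewrite vc nv /= => ->.
Qed.

(** * Counting the edges of a critical cell *)

Definition edge_ends c := [set u | (u != star) && (inr (par_edge u) \in c)].

Lemma edges_of_cellE c : is_cell c ->
  [set a in c | if a is inr _ then true else false] = [set inr (par_edge u) | u in edge_ends c].
Proof.
case/is_cellP => _ c_edges _; apply/setP => -[v|e]; rewrite !inE ?andbF ?andbT.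
  by case: imsetP => // -[u _].
apply/idP/imsetP => [ec|[u]]; last by rewrite inE => /andP [_ uc] [->].
have [u nu e_u] := par_edge_of_edge (c_edges e ec).
by exists u; [rewrite inE nu -e_u | rewrite e_u].
Qed.

Lemma dim_edge_ends c : is_cell c -> dim c = #|edge_ends c|.
Proof.
move=> cc; rewrite /dim edges_of_cellE // card_in_imset // => u w.
by rewrite !inE => /andP [nu _] /andP [nw _] [/par_edge_inj]; apply.
Qed.

Lemma par_inj_edge_ends c : is_cell c -> {in edge_ends c &, injective par}.
Proof.
move=> cc u w; rewrite !inE => /andP [nu uc] /andP [nw wc] e; apply: contra_eq e => nuw.
have euw : inr (par_edge u) != inr (par_edge w) :> elt V.
  by apply: contra nuw => /eqP [/par_edge_inj ->].
apply/eqP => e; move: (disjointFr (cell_disjoint cc uc wc euw) (mem_par_edge_par u)).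
by rewrite e mem_par_edge_par.
Qed.

Lemma essential_par_sibling u v : u != star -> v != star -> par v = par u -> v != u ->
  essential adj (par u).
Proof.
move=> nu nv vu nvu; set t := par u.
have tu : adj t u by rewrite adj_sym adj_par.
have tv : adj t v by rewrite /t -vu adj_sym adj_par.
have nt : t != star.
  by apply: contraNneq nvu => et; rewrite et in tu tv; rewrite (star_adj_uniq tu tv).
have := depth_par nu; have := depth_par nv; have := depth_par nt; rewrite vu -/t => dt dv du.
have ptu : par t != u by apply: contra_eqN du => /eqP <-; lia.
have ptv : par t != v by apply: contra_eqN dv => /eqP <-; lia.
have : #|[:: par t; u; v]| <= #|[set w | adj t w]|.
  by apply/subset_leq_card/subsetP => w; rewrite !inE => /or3P [] /eqP ->; rewrite ?adj_par.
by rewrite /essential /deg (card_uniqP _) //= !inE negb_or ptu ptv eq_sym nvu.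
Qed.

Lemma dim_critical_le_essential c : critical c -> dim c <= #|[set v | essential adj v]|.
Proof.
move=> crit; have /and3P [cc _ _] := crit.
rewrite dim_edge_ends // -(card_in_imset (par_inj_edge_ends cc)).
apply/subset_leq_card/subsetP => _ /imsetP [u + ->]; rewrite !inE => /andP [nu uc].
by have [v [_ nv vu nvu]] := critical_sibling crit nu uc; apply: essential_par_sibling nv vu nvu.
Qed.

Lemma double_dim_critical c : critical c -> (dim c).*2 <= n.
Proof.
move=> crit; have /and3P [cc _ _] := crit; have [c_n _ _] := is_cellP _ cc.
set E := edge_ends c.
pose sib u := odflt star [pick v | [&& inl v \in c, v != star & par v == par u]].
have sibP u : u \in E -> inl (sib u) \in c /\ par (sib u) = par u.
  rewrite inE => /andP [nu uc]; rewrite /sib; case: pickP => [v /and3P [vc _ /eqP] //|none].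
  by have [v [vc nv vu _]] := critical_sibling crit nu uc; move: (none v); rewrite vc nv vu eqxx.
pose A : {set elt V} := [set inr (par_edge u) | u in E].
pose B : {set elt V} := [set inl (sib u) | u in E].
have cardA : #|A| = #|E| by rewrite /A /E -edges_of_cellE // -dim_edge_ends.
have cardB : #|B| = #|E|.
  apply: card_in_imset => u w uE wE [e]; apply: (par_inj_edge_ends cc) => //.
  by rewrite -(sibP u uE).2 -(sibP w wE).2 e.
have AB : A :&: B = set0.
  by apply/setP => a; rewrite !inE; apply/andP => -[/imsetP [u _ ->] /imsetP [w _]].
have : A :|: B \subset c.
  apply/subsetP => a; rewrite inE => /orP [] /imsetP [u uE ->]; last by case: (sibP u uE).
  by move: uE; rewrite inE => /andP [].
move/subset_leq_card; rewrite cardsU AB cards0 subn0 cardA cardB c_n.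
by rewrite (dim_edge_ends cc) -addnn.
Qed.

End Cells.
End VertexOrder.
End Tree.

Theorem mainTheorem13 (V : finType) (adj : rel V) (star : V)
  (lab : V -> V -> nat) (n : nat) :
  is_tree adj -> deg adj star = 1 -> valid_labelling adj star lab ->
  suff_subdiv adj n ->
  forall c : cell V, critical adj star lab n c ->
    dim c <= minn n./2 #|[set v | essential adj v]|.
Proof.
case=> adj_sym adj_irr adj_conn adj_acyclic star_deg1 [_ lab_ok] _ c crit.
have lab_inj v : v != star -> {in [set w | adj v w] &, injective (lab v)} by case/lab_ok.
rewrite leq_min geq_half_double.
by rewrite (double_dim_critical adj_sym adj_irr adj_conn adj_acyclic star_deg1 lab_inj crit)
  (dim_critical_le_essential adj_sym adj_irr adj_conn adj_acyclic star_deg1 lab_inj crit).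
Qed.
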